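(* Let $s,m$ be positive integers with $m$ odd, and let $n=sm$. Let $F\in\mathbb{F}_{2^s}[x]$ be a polynomial which, viewed as a function $\mathbb{F}_{2^n}\to\mathbb{F}_{2^n}$, is differentially $(1,4)$-uniform, i.e. $\delta_{F,1}=4$. Then for all $a,b\in\mathbb{F}_{2^s}$ with $a\neq 0$, the equation $F(x+a)+F(x)=b$ has no solution $x\in\mathbb{F}_{2^n}\setminus\mathbb{F}_{2^s}$.
   Context: For a function $F:\mathbb{F}_{p^n}\to\mathbb{F}_{p^n}$ and $c\in\mathbb{F}_{p^n}$, let ${}_c\Delta_F(a,b)=\#\{x\in\mathbb{F}_{p^n}: F(x+a)-cF(x)=b\}$, and the $c$-differential uniformity of $F$ is $\delta_{F,c}=\max\{{}_c\Delta_F(a,b): a,b\in\mathbb{F}_{p^n},\ a\neq 0 \text{ if } c=1\}$. $F$ is called differentially $(c,\delta)$-uniform if $\delta_{F,c}=\delta$. *)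

From HB Require Import structures.
From mathcomp Require Import all_boot all_order all_algebra all_field.
Set Implicit Arguments. Unset Strict Implicit. Unset Printing Implicit Defensive.
Import Order.TTheory GRing.Theory Num.Theory.
Local Open Scope ring_scope.

Definition cDelta (K : finFieldType) (F : K -> K) (c a b : K) : nat :=
  #|[set x : K | F (x + a) - c * F x == b]|.

Definition cdiff_unif (K : finFieldType) (F : K -> K) (c : K) : nat :=
  (\max_(ab : K * K | (c == 1%R) ==> (ab.1 != 0%R)) cDelta F c ab.1 ab.2)%N.

Definition in_subfield (K : finFieldType) (s : nat) (x : K) : bool :=
  x ^+ (2 ^ s) == x.

From HB Require Import structures.
From mathcomp Require Import all_boot all_order all_algebra all_field.
Import GRing.Theory.
Local Open Scope ring_scope.
Set Implicit Arguments.
Unset Strict Implicit.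

(* The Frobenius power sigma : y |-> y^(2^s) fixes a, b and the coefficients
   of F, so the solution set of F(y+a) + F(y) = b is stable under sigma and,
   in characteristic 2, under y |-> y + a.  Since sigma^m = id with m odd,
   sigma x <> x forces sigma^2 x <> x, and sigma^k x = x + c with c fixed
   forces x = sigma^(km) x = x + m c, i.e. c = 0.  Hence x, sigma x, sigma^2 x
   and their translates by a are six distinct solutions, whereas the
   differential uniformity allows at most 4. *)

Section IteratedAdditive.

Variables (V : zmodType) (f : {additive V -> V}) (m : nat).
Hypothesis iter_f_order : forall v, iter m f v = v.

Lemma iter_order_mul k v : iter (m * k) f v = v.
Proof. by elim: k => [|k IHk]; rewrite ?muln0 // mulnS iterD IHk. Qed.

Lemma iter_addr_fixed n u c : f c = c -> iter n f (u + c) = iter n f u + c.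
Proof. by move=> fc; elim: n => //= n ->; rewrite raddfD fc. Qed.

Lemma iter_eq_addr_mulrn k u c : f c = c -> iter k f u = u + c -> c *+ m = 0.
Proof.
move=> fc fku.
have iter_kt t : iter (k * t) f u = u + c *+ t.
  elim: t => [|t IHt]; first by rewrite muln0 addr0.
  by rewrite mulnSr iterD fku iter_addr_fixed // IHt mulrSr addrA.
by apply: (addrI u); rewrite -iter_kt mulnC iter_order_mul addr0.
Qed.

Lemma iter_eq_iter_addr_mulrn i j u c :
  f c = c -> iter i f u = iter j f u + c -> c *+ m = 0.
Proof.
move=> fc; have [/subnK <-|/ltnW/subnK <-] := leqP j i; rewrite iterD.
  exact: iter_eq_addr_mulrn.
move=> /esym/(canRL (addrK c))/iter_eq_addr_mulrn.
by rewrite raddfN fc mulNrn => /(_ erefl)/eqP; rewrite oppr_eq0 => /eqP.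
Qed.

End IteratedAdditive.

Lemma iter2_fixed_odd (T : Type) (f : T -> T) m x :
  odd m -> iter m f x = x -> iter 2 f x = x -> f x = x.
Proof.
move=> odd_m fmx f2x; have f2kx k : iter (2 * k) f x = x.
  by elim: k => [|k IHk] //; rewrite mulnS iterD IHk.
by rewrite -{1}fmx -(odd_double_half m) odd_m -muln2 mulnC add1n /= f2kx.
Qed.

Lemma iter_ord3_inj (T : eqType) (f : T -> T) x :
  injective f -> f x != x -> iter 2 f x != x ->
  injective (fun i : 'I_3 => iter i f x).
Proof.
move=> inj_f /eqP f1x /eqP /= f2x.
move=> [[|[|[|//]]] lti] [[|[|[|//]]] ltj] //= e; apply/val_inj => //=.
- by case: (f1x (esym e)).
- by case: (f2x (esym e)).
- by case: (f1x (inj_f _ _ (esym e))).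
- by case: (f1x (inj_f _ _ e)).
Qed.

Lemma mulrn_odd_pchar2 (R : nzRingType) (x : R) n :
  2%N \in [pchar R] -> odd n -> x *+ n = x.
Proof.
move=> ch2 odd_n; rewrite -(odd_double_half n) odd_n -muln2 mulnC mulrnDr.
by rewrite mulrnA (mulrn_pchar ch2) mul0rn addr0.
Qed.

Section TranslatedOrbit.

Variables (V : zmodType) (f : {additive V -> V}) (m : nat).
Hypotheses (inj_f : injective f) (odd_m : odd m).
Hypothesis iter_f_order : forall v, iter m f v = v.
Hypothesis mulrn_order_inj : forall c : V, c *+ m = 0 -> c = 0.

Lemma translated_orbit_inj x a :
  f a = a -> a != 0 -> f x != x ->
  injective (fun p : 'I_3 * bool => iter p.1 f x + a *+ p.2).
Proof.
move=> fa a_neq0 fx_neq [i e] [j e'] /= /(canRL (addrK _)); rewrite -addrA.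
move=> fij; have fc : f (a *+ e' - a *+ e) = a *+ e' - a *+ e.
  by rewrite raddfB !(raddfMn f) fa.
have /mulrn_order_inj/eqP := iter_eq_iter_addr_mulrn iter_f_order fc fij.
rewrite subr_eq0 => /eqP eae; rewrite eae subrr addr0 in fij.
have -> : e' = e.
  by case: e e' eae {fij fc} => [] [] //= /eqP; rewrite ?(eq_sym 0) (negPf a_neq0).
have f2x_neq : iter 2 f x != x.
  by apply: contra fx_neq => /eqP/(iter2_fixed_odd odd_m (iter_f_order x))->.
by rewrite (iter_ord3_inj inj_f fx_neq f2x_neq fij).
Qed.

End TranslatedOrbit.

Section FrobeniusPower.

Variables (L : finFieldType) (s : nat).

(* As for pFrobenius_aut, the characteristic proof is an argument so that
   the rmorphism instance below can be declared canonically. *)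
Definition frob_pow of 2%N \in [pchar L] := fun x : L => x ^+ (2 ^ s).

Variable ch2 : 2%N \in [pchar L].
Local Notation sigma := (frob_pow ch2).

Lemma frob_pow_is_nmod_morphism : nmod_morphism sigma.
Proof.
split=> [|x y]; first by rewrite /frob_pow expr0n expn_eq0.
by apply: exprDn_pchar; rewrite (eq_pnat _ (pcharf_eq ch2)) pnatX pnat_id.
Qed.

Lemma frob_pow_is_monoid_morphism : monoid_morphism sigma.
Proof. by split=> [|x y]; rewrite /frob_pow ?expr1n ?exprMn. Qed.

HB.instance Definition _ :=
  GRing.isNmodMorphism.Build L L sigma frob_pow_is_nmod_morphism.
HB.instance Definition _ :=
  GRing.isMonoidMorphism.Build L L sigma frob_pow_is_monoid_morphism.

Lemma in_subfieldE x : in_subfield s x = (sigma x == x).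
Proof. by []. Qed.

Lemma iter_frob_pow k x : iter k sigma x = x ^+ (2 ^ (s * k)).
Proof.
elim: k => [|k IHk] /=; first by rewrite muln0 expr1.
by rewrite IHk /frob_pow -exprM -expnD mulnS addnC.
Qed.

Lemma iter_frob_pow_card m x : #|L| = (2 ^ (s * m))%N -> iter m sigma x = x.
Proof. by move=> cardL; rewrite iter_frob_pow -cardL expf_card. Qed.

Lemma map_poly_frob_pow (F : {poly L}) :
  (forall i, in_subfield s F`_i) -> map_poly sigma F = F.
Proof. by move=> F_sub; apply/polyP => i; rewrite coef_map; exact/eqP/F_sub. Qed.

End FrobeniusPower.

Definition cdiff_set (K : finFieldType) (F : K -> K) (c a b : K) :=
  [set x : K | F (x + a) - c * F x == b].

Lemma cDelta_le_cdiff_unif (K : finFieldType) (F : K -> K) (c a b : K) :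
  (c == 1) ==> (a != 0) -> (#|cdiff_set F c a b| <= cdiff_unif F c)%N.
Proof.
exact: (@leq_bigmax_cond _ _ (fun ab : K * K => cDelta F c ab.1 ab.2) (a, b)).
Qed.

Lemma cdiff_set_addr (K : finFieldType) (F : K -> K) (a b : K) x :
  2%N \in [pchar K] -> x \in cdiff_set F 1 a b -> x + a \in cdiff_set F 1 a b.
Proof.
move=> ch2; rewrite !inE !mul1r !(GRing.subr_pchar2 ch2) -addrA.
by rewrite (addrr_pchar2 ch2) addr0 addrC.
Qed.

Lemma cdiff_set_rmorph (K : finFieldType) (phi : {rmorphism K -> K})
    (F : {poly K}) (c a b : K) x :
  map_poly phi F = F -> phi c = c -> phi a = a -> phi b = b ->
  x \in cdiff_set (horner F) c a b -> phi x \in cdiff_set (horner F) c a b.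
Proof.
move=> phiF phic phia phib; rewrite !inE => /eqP Fx.
by rewrite -phia -rmorphD -phiF !horner_map -phic -rmorphM -rmorphB Fx phib.
Qed.

Theorem proposition2p1 (L : finFieldType) (s m : nat)
  (hs : (0 < s)%N) (hm0 : (0 < m)%N) (hm : odd m)
  (hL : #|L| = (2 ^ (s * m))%N)
  (F : {poly L}) (hF : forall i : nat, in_subfield s F`_i)
  (hdu : cdiff_unif (fun x => F.[x]) 1 = 4%N) :
  forall a b : L, in_subfield s a -> in_subfield s b -> a != 0 ->
  forall x : L, ~~ in_subfield s x -> F.[x + a] + F.[x] != b.
Proof.
move=> a b ha hb a_neq0 x hx; apply/negP => /eqP Fx.
have ch2 : 2%N \in [pchar L] by apply: card_finPcharP hL _.
rewrite !(in_subfieldE _ ch2) in ha hb hx; move/eqP in ha; move/eqP in hb.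
pose D := cdiff_set (horner F) 1 a b.
have Dx : x \in D by rewrite inE mul1r (GRing.subr_pchar2 ch2) Fx.
have D_orbit (p : 'I_3 * bool) : iter p.1 (frob_pow s ch2) x + a *+ p.2 \in D.
  have Dix : iter p.1 (frob_pow s ch2) x \in D.
    elim: (nat_of_ord p.1) => //= k IHk.
    by apply: cdiff_set_rmorph IHk; rewrite ?rmorph1 ?map_poly_frob_pow.
  by case: p.2; rewrite ?addr0 //; apply: cdiff_set_addr.
have mulrm_inj (c : L) : c *+ m = 0 -> c = 0 by rewrite mulrn_odd_pchar2.
have orbit_inj := translated_orbit_inj (fmorph_inj _) hm
  (fun y => iter_frob_pow_card ch2 y hL) mulrm_inj ha a_neq0 hx.
have D_le4 : (#|D| <= 4)%N.
  by rewrite -hdu; apply: cDelta_le_cdiff_unif; rewrite a_neq0 implybT.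
suff : (#|{: 'I_3 * bool}| <= #|D|)%N.
  by rewrite card_prod card_ord card_bool => /leq_trans/(_ D_le4).
rewrite -(card_imset _ orbit_inj).
by apply/subset_leq_card/subsetP => _ /imsetP[p _ ->].
Qed.
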